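(* A pushout square in $\mathbf{MetCH_{sep}}$ all four of whose morphisms are embeddings is also a pullback square in $\mathbf{MetCH_{sep}}$.
   Context: A metric on a set $X$ is a map $d\colon X\times X\to[0,\infty]$ with $d(x,x)=0$ and $d(x,z)\le d(x,y)+d(y,z)$ (not necessarily symmetric, $\infty$ allowed); separated means $d(x,y)=0=d(y,x)$ implies $x=y$. A separated metric compact Hausdorff space is a compact Hausdorff space with a separated metric $d\colon X\times X\to[0,\infty]$ continuous with respect to the upper topology on $[0,\infty]$ (open sets $]u,\infty]$, plus $\emptyset$ and $[0,\infty]$). $\mathbf{MetCH_{sep}}$: these spaces with continuous non-expansive maps as morphisms. An embedding is an injective morphism $f$ with $d_X(x,y)=d_Y(f(x),f(y))$ for all $x,y$. *)

From HB Require Import structures.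
From mathcomp Require Import all_boot all_order all_algebra.
From mathcomp Require Import all_classical all_reals topology.
Set Implicit Arguments. Unset Strict Implicit. Unset Printing Implicit Defensive.
Import Order.TTheory GRing.Theory Num.Theory.
Local Open Scope classical_set_scope.
Local Open Scope ring_scope.
Local Open Scope ereal_scope.

(* A separated metric compact Hausdorff space: a compact Hausdorff space with a
   separated (possibly non-symmetric, possibly infinite) metric
   d : X * X -> [0, oo] that is continuous for the upper topology on [0, oo],
   i.e. the preimage of every ]u, oo] is open in X * X. *)
Record is_metCH_sep (R : realType) (T : topologicalType) (d : T -> T -> \bar R)
  : Prop := {
  mch_hausdorff : hausdorff_space T;
  mch_compact : compact [set: T];
  mch_ge0 : forall x y, 0 <= d x y;
  mch_refl : forall x, d x x = 0;
  mch_triangle : forall x y z, d x z <= d x y + d y z;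
  mch_sep : forall x y, d x y = 0 -> d y x = 0 -> x = y;
  mch_cont : forall u : \bar R, 0 <= u ->
     open [set p : T * T | u < d p.1 p.2] }.

Record MetCH_sep (R : realType) := MkMetCH {
  mcarrier :> topologicalType;
  mdist : mcarrier -> mcarrier -> \bar R;
  mprop : is_metCH_sep mdist }.

Section Defs.
Variable R : realType.

Definition morph (X Y : MetCH_sep R) (f : X -> Y) : Prop :=
  continuous f /\ forall x y, mdist (f x) (f y) <= mdist x y.

Definition embedding (X Y : MetCH_sep R) (f : X -> Y) : Prop :=
  morph f /\ injective f /\ forall x y, mdist (f x) (f y) = mdist x y.

Definition comm_square (A B C D : MetCH_sep R)
  (f : A -> B) (g : A -> C) (h : B -> D) (k : C -> D) : Prop :=
  [/\ morph f, morph g, morph h, morph k & h \o f = k \o g].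

Definition is_pushout (A B C D : MetCH_sep R)
  (f : A -> B) (g : A -> C) (h : B -> D) (k : C -> D) : Prop :=
  comm_square f g h k /\
  forall (E : MetCH_sep R) (p : B -> E) (q : C -> E),
    morph p -> morph q -> p \o f = q \o g ->
    exists! u : D -> E, [/\ morph u, u \o h = p & u \o k = q].

Definition is_pullback (A B C D : MetCH_sep R)
  (f : A -> B) (g : A -> C) (h : B -> D) (k : C -> D) : Prop :=
  comm_square f g h k /\
  forall (E : MetCH_sep R) (p : E -> B) (q : E -> C),
    morph p -> morph q -> h \o p = k \o q ->
    exists! u : E -> A, [/\ morph u, f \o u = p & g \o u = q].

End Defs.

(* Given [h b = k c], we find [a] with [f a = b] and [g a = c] by testing the
   pushout against the gluing of [B] and [C] along [A]: the set [B] together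
   with the points of [C] outside [g A], with the final topology of the two
   inclusions and the distance [inf_a d(x, f a) + d(g a, y)] between [x] in [B]
   and [y] in [C].  Since [f] and [g] are embeddings and [A] is compact, this
   is again a separated metric compact Hausdorff space (Hausdorffness also uses
   the injectivity of [h] and [k]), and there [b] and [c] are identified only
   if they come from a point of [A].  The map into [A] so
   obtained is non-expansive since [f] is isometric, and continuous since [f]
   is a closed embedding. *)

From HB Require Import structures.
From mathcomp Require Import all_boot all_order all_algebra.
From mathcomp Require Import all_classical all_reals topology ereal normedtype lra.
Set Implicit Arguments. Unset Strict Implicit. Unset Printing Implicit Defensive.
Import Order.TTheory GRing.Theory Num.Theory.
Local Open Scope classical_set_scope.
Local Open Scope ring_scope.

Section ereal_semicontinuity.
Context {R : realType}.
Local Open Scope ereal_scope.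

Lemma lte_adde_split (a b : \bar R) (v : R) :
  0 <= a -> 0 <= b -> v%:E < a + b ->
  exists v1 v2 : R, [/\ v1%:E < a, v2%:E < b & (v <= v1 + v2)%R].
Proof.
case: a => [a| |] //; case: b => [b| |] // a0 b0.
- rewrite -EFinD lte_fin => vab.
  exists (a - (a + b - v) / 2)%R, (b - (a + b - v) / 2)%R.
  by split; rewrite ?lte_fin; lra.
- move=> _; exists (a - 1)%R, (v - a + 1)%R.
  by split; rewrite ?lte_fin ?ltry //; lra.
- move=> _; exists (v - b + 1)%R, (b - 1)%R.
  by split; rewrite ?lte_fin ?ltry //; lra.
- by move=> _; exists v, 0%R; split; rewrite ?ltry //; lra.
Qed.

Lemma lte_fin_dense (r : R) (e : \bar R) : r%:E < e ->
  exists2 v : R, (r < v)%R & v%:E < e.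
Proof.
case: e => [e| |] //; rewrite ?lte_fin => re.
  by exists ((r + e) / 2)%R; rewrite ?lte_fin; lra.
by exists (r + 1)%R; rewrite ?ltry //; lra.
Qed.

Lemma lower_semicontinuousD {X : topologicalType} (F G : X -> \bar R) :
  (forall x, 0 <= F x) -> (forall x, 0 <= G x) ->
  lower_semicontinuous F -> lower_semicontinuous G ->
  lower_semicontinuous (F \+ G).
Proof.
move=> F0 G0 lscF lscG x v /(lte_adde_split (F0 x) (G0 x)) [v1 [v2 [vF vG v12]]].
have [U nU UF] := lscF x v1 vF; have [V nV VG] := lscG x v2 vG.
exists (U `&` V); first exact: filterI.
move=> y [/UF Fy /VG Gy]; apply: le_lt_trans (lteD Fy Gy).
by rewrite -EFinD lee_fin.
Qed.

Lemma lower_semicontinuous_comp {X Y : topologicalType} (F : Y -> \bar R)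
    (phi : X -> Y) :
  continuous phi -> lower_semicontinuous F -> lower_semicontinuous (F \o phi).
Proof.
move=> cphi lscF x v /lscF [V nV VF].
by exists (phi @^-1` V) => [|y /VF //]; exact: cphi.
Qed.

Lemma lower_semicontinuous_open_gt {X : topologicalType} (F : X -> \bar R)
    (u : \bar R) :
  lower_semicontinuous F -> 0 <= u -> open [set x | u < F x].
Proof.
move=> lscF; case: u => [r| |] // _; first exact: (lower_semicontinuousP F).1.
rewrite (_ : [set x | +oo < F x] = set0); first exact: open0.
by apply/seteqP; split => // x /=; rewrite ltNge leey.
Qed.

(* The index filter pairs a neighbourhood of [y0] with thresholds slightly above
   [r]: compactness of [T] then yields one uniform threshold [w > r]. *)
Lemma compact_lsc_inf_near {T Y : topologicalType} (F : T * Y -> \bar R)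
    (y0 : Y) (r : R) :
  compact [set: T] -> lower_semicontinuous F -> (forall a, r%:E < F (a, y0)) ->
  \forall y \near y0, r%:E < ereal_inf (range (fun a => F (a, y))).
Proof.
move=> /compact_near_coveringP cT lscF Fr.
have [a _|] := cT (Y * R)%type (filter_prod (nbhs y0) (at_right r))
  (fun i a => (i.2)%:E < F (a, i.1)) _.
- have [v rv vF] := lte_fin_dense (Fr a).
  have [P [[U V] [nU nV] UV] PF] := lscF (a, y0) v vF.
  exists (U, [set i : Y * R | V i.1 /\ (i.2 < v)%R]); first split => //.
    exists (V, [set w | (w < v)%R]) => [|[y w] [] //].
    by split => //; exact: nbhs_right_lt.
  move=> [a' [y w]] [/= Ua' [Vy wv]].
  by apply: lt_trans (PF (a', y) (UV (a', y) (conj Ua' Vy))); rewrite lte_fin.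
move=> [V W] [nV nW] VW.
have /filter_ex [w [Ww rw]] : at_right r (W `&` [set w | (r < w)%R]).
  exact: filterI nW (nbhs_right_gt r).
apply: filterS nV => y Vy; apply: (@lt_le_trans _ _ w%:E); first by rewrite lte_fin.
by apply: le_ereal_inf_tmp => _ [a _ <-]; apply/ltW/(VW (y, w) (conj Vy Ww) a).
Qed.

Lemma lower_semicontinuous_inf {T Y : topologicalType} (F : T * Y -> \bar R) :
  compact [set: T] -> lower_semicontinuous F ->
  lower_semicontinuous (fun y => ereal_inf (range (fun a => F (a, y)))).
Proof.
move=> cT lscF y r rF.
exists [set y | r%:E < ereal_inf (range (fun a => F (a, y)))] => //.
apply: compact_lsc_inf_near => // a.
by apply: lt_le_trans rF _; apply: ereal_inf_lbound; exists a.
Qed.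

Lemma compact_lsc_inf_eq0 {T Y : topologicalType} (F : T * Y -> \bar R)
    (y : Y) :
  compact [set: T] -> lower_semicontinuous F -> (forall z, 0 <= F z) ->
  ereal_inf (range (fun a => F (a, y))) = 0 -> exists a, F (a, y) = 0.
Proof.
move=> cT lscF F0 inf0; apply: contrapT => /forallNP Fneq0.
have Fgt0 a : 0%R%:E < F (a, y) by rewrite lt0e F0 andbT; apply/eqP.
have /nbhs_singleton := compact_lsc_inf_near cT lscF Fgt0.
by rewrite /= inf0 ltxx.
Qed.

Lemma le_ereal_infDl {T : Type} (m c : \bar R) (F : T -> \bar R) :
  0 <= c -> (forall a, 0 <= F a) -> (forall a, m <= c + F a) ->
  m <= c + ereal_inf (range F).
Proof.
move=> c0 F0 mF; case: c c0 mF => [c| |] // c0 mF.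
  rewrite addeC -leeBlDr //; apply: le_ereal_inf_tmp => _ [a _ <-].
  by rewrite leeBlDr // addeC.
have : 0 <= ereal_inf (range F) by apply: le_ereal_inf_tmp => _ [a _ <-].
by case: (ereal_inf _) => // [r|] _; rewrite ?addye ?leey.
Qed.

Lemma le_ereal_infDr {T : Type} (m c : \bar R) (F : T -> \bar R) :
  0 <= c -> (forall a, 0 <= F a) -> (forall a, m <= F a + c) ->
  m <= ereal_inf (range F) + c.
Proof.
by move=> c0 F0 mF; rewrite addeC; apply: le_ereal_infDl => // a; rewrite addeC.
Qed.

End ereal_semicontinuity.

Lemma hausdorff_prod {T U : topologicalType} :
  hausdorff_space T -> hausdorff_space U -> hausdorff_space (T * U)%type.
Proof.
move=> hT hU p q pq; apply: injective_projections; [apply: hT|apply: hU].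
- move=> A B pA qB; have [z [Az Bz]] := pq _ _ (cvg_fst pA) (cvg_fst qB).
  by exists z.1.
- move=> A B pA qB; have [z [Az Bz]] := pq _ _ (cvg_snd pA) (cvg_snd qB).
  by exists z.2.
Qed.

Lemma continuous_prod_map {X Y X' Y' : topologicalType} (phi : X -> X')
    (psi : Y -> Y') :
  continuous phi -> continuous psi ->
  continuous (fun z : X * Y => (phi z.1, psi z.2)).
Proof.
move=> cphi cpsi z.
apply: (@cvg_pair _ _ _ (nbhs z) (nbhs (phi z.1)) (nbhs (psi z.2))).
  by apply: cvg_comp; [exact: cvg_fst|exact: cphi].
by apply: cvg_comp; [exact: cvg_snd|exact: cpsi].
Qed.

Lemma cluster_continuous {X Y : topologicalType} (phi : X -> Y) (p q : X) :
  continuous phi -> cluster (nbhs p) q -> cluster (nbhs (phi p)) (phi q).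
Proof.
move=> cphi pq U V pU qV.
have [z [Uz Vz]] := pq _ _ (cphi p U pU) (cphi q V qV).
by exists (phi z).
Qed.

Lemma continuous_compact_injective_factor {Z A B : topologicalType}
    (f : A -> B) (u : Z -> A) :
  compact [set: A] -> hausdorff_space B -> continuous f -> injective f ->
  continuous (f \o u) -> continuous u.
Proof.
move=> cA hB cf injf cfu; apply/continuousP => O oO; rewrite -closedC.
have -> : ~` (u @^-1` O) = (f \o u) @^-1` (f @` ~` O).
  apply/seteqP; split => z /=; first by exists (u z).
  by move=> [a nOa /injf <-].
apply: preimage_closed => [z _|]; first exact: cfu.
apply: compact_closed => //; apply: continuous_compact.
  exact: continuous_subspaceT.
exact: subclosed_compact (open_closedC oO) cA _.
Qed.

Section metCH_sep_facts.
Context {R : realType} (M : MetCH_sep R).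
Local Open Scope ereal_scope.

Lemma mdist_ge0 (x y : M) : 0 <= mdist x y. Proof. exact: (mch_ge0 (mprop M)). Qed.

Lemma mdist_refl (x : M) : mdist x x = 0. Proof. exact: (mch_refl (mprop M)). Qed.

Lemma mdist_triangle (x y z : M) : mdist x z <= mdist x y + mdist y z.
Proof. exact: (mch_triangle (mprop M)). Qed.

Lemma mdist_lsc : lower_semicontinuous (fun z : M * M => mdist z.1 z.2).
Proof.
apply/lower_semicontinuousP => r; have [r0|r0] := leP 0%R r.
  by apply: (mch_cont (mprop M)); rewrite lee_fin.
rewrite (_ : [set _ | _] = setT); first exact: openT.
apply/seteqP; split => // z _ /=.
by apply: lt_le_trans (mdist_ge0 _ _); rewrite lte_fin.
Qed.

End metCH_sep_facts.

#[local] Hint Extern 0 (is_true (_ <= mdist _ _)%E) => exact: mdist_ge0 : core.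

Definition bridge_dist {R : realType} {A B C : MetCH_sep R} (f : A -> B)
    (g : A -> C) (x : B) (y : C) : \bar R :=
  ereal_inf (range (fun a => (mdist x (f a) + mdist (g a) y)%E)).

Lemma bridge_dist_ge0 {R : realType} {A B C : MetCH_sep R} (f : A -> B)
    (g : A -> C) x y : (0 <= bridge_dist f g x y)%E.
Proof. by apply: le_ereal_inf_tmp => _ [a _ <-]; rewrite adde_ge0. Qed.

Section bridge_dist.
Context {R : realType} {A B C : MetCH_sep R} (f : A -> B) (g : A -> C).
Hypothesis fg_dist : forall a a', mdist (g a) (g a') = mdist (f a) (f a').
Hypotheses (fcont : continuous f) (gcont : continuous g).
Local Open Scope ereal_scope.

Lemma bridge_dist_le a x y :
  bridge_dist f g x y <= mdist x (f a) + mdist (g a) y.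
Proof. by apply: ereal_inf_lbound; exists a. Qed.

Lemma bridge_distfl a y : bridge_dist f g (f a) y = mdist (g a) y.
Proof.
apply/le_anti/andP; split.
  by apply: le_trans (bridge_dist_le a _ _) _; rewrite mdist_refl add0e.
by apply: le_ereal_inf_tmp => _ [a' _ <-]; rewrite -fg_dist; exact: mdist_triangle.
Qed.

Lemma bridge_distgr x a : bridge_dist f g x (g a) = mdist x (f a).
Proof.
apply/le_anti/andP; split.
  by apply: le_trans (bridge_dist_le a _ _) _; rewrite mdist_refl adde0.
by apply: le_ereal_inf_tmp => _ [a' _ <-]; rewrite fg_dist; exact: mdist_triangle.
Qed.

Lemma bridge_dist_trianglel x x' y :
  bridge_dist f g x y <= mdist x x' + bridge_dist f g x' y.
Proof.
apply: le_ereal_infDl => [|a|a]; [exact: mdist_ge0|exact: adde_ge0|].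
apply: le_trans (bridge_dist_le a x y) _; rewrite addeA.
exact: leeD (mdist_triangle _ _ _) (lexx _).
Qed.

Lemma bridge_dist_triangler x y y' :
  bridge_dist f g x y' <= bridge_dist f g x y + mdist y y'.
Proof.
apply: le_ereal_infDr => [|a|a]; [exact: mdist_ge0|exact: adde_ge0|].
apply: le_trans (bridge_dist_le a x y') _; rewrite -addeA.
exact: leeD (lexx _) (mdist_triangle _ _ _).
Qed.

Lemma mdist_le_bridge_dist x y x' :
  mdist x x' <= bridge_dist f g x y + bridge_dist g f y x'.
Proof.
apply: le_ereal_infDr => [|a|a]; [exact: bridge_dist_ge0|exact: adde_ge0|].
apply: le_ereal_infDl => [|a'|a']; [exact: adde_ge0|exact: adde_ge0|].
apply: le_trans (mdist_triangle x (f a) x') _.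
apply: le_trans (leeD (lexx _) (mdist_triangle (f a) (f a') x')) _.
rewrite -fg_dist.
apply: le_trans (leeD (lexx _) (leeD (mdist_triangle (g a) y (g a')) (lexx _))) _.
by rewrite !addeA.
Qed.

Let bridge_summand (z : A * (B * C)) := mdist z.2.1 (f z.1) + mdist (g z.1) z.2.2.

Let bridge_summand_lsc : lower_semicontinuous bridge_summand.
Proof.
apply: lower_semicontinuousD => [z|z||]; try exact: mdist_ge0.
- apply: (@lower_semicontinuous_comp _ _ _ (fun z : B * B => mdist z.1 z.2)
    (fun z : A * (B * C) => (z.2.1, f z.1))); last exact: mdist_lsc.
  move=> z; apply: cvg_pair => /=.
    by apply: cvg_comp; [exact: cvg_snd|exact: cvg_fst].
  by apply: cvg_comp; [exact: cvg_fst|exact: fcont].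
- apply: (@lower_semicontinuous_comp _ _ _ (fun z : C * C => mdist z.1 z.2)
    (fun z : A * (B * C) => (g z.1, z.2.2))); last exact: mdist_lsc.
  move=> z; apply: cvg_pair => /=.
    by apply: cvg_comp; [exact: cvg_fst|exact: gcont].
  by apply: cvg_comp; [exact: cvg_snd|exact: cvg_snd].
Qed.

Lemma bridge_dist_lsc :
  lower_semicontinuous (fun z : B * C => bridge_dist f g z.1 z.2).
Proof.
apply: (@lower_semicontinuous_inf _ _ _ bridge_summand) bridge_summand_lsc.
exact: mch_compact (mprop A).
Qed.

Lemma bridge_dist_eq0 x y :
  bridge_dist f g x y = 0 -> exists a, mdist x (f a) = 0 /\ mdist (g a) y = 0.
Proof.
move=> /(@compact_lsc_inf_eq0 _ _ _ bridge_summand (x, y)) [].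
- exact: mch_compact (mprop A).
- exact: bridge_summand_lsc.
- by move=> z; rewrite adde_ge0.
- move=> a /eqP; rewrite padde_eq0 ?mdist_ge0 // => /andP[/eqP xa /eqP ay].
  by exists a.
Qed.

End bridge_dist.

Section glued_space.
Context {R : realType} {A B C : MetCH_sep R} (f : A -> B) (g : A -> C).
Hypotheses (fcont : continuous f) (gcont : continuous g) (ginj : injective g).
Hypothesis fg_dist : forall a a', mdist (g a) (g a') = mdist (f a) (f a').
Let gf_dist a a' : mdist (f a) (f a') = mdist (g a) (g a').
Proof. by rewrite fg_dist. Qed.
Local Open Scope ereal_scope.

(* A point [g a] of [C] is represented by [inl (f a)]. *)
Definition glued := (B + {y : C | ~ range g y})%type.
HB.instance Definition _ := gen_eqMixin glued.
HB.instance Definition _ := gen_choiceMixin glued.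

Definition glueB (x : B) : glued := inl x.

Definition glueC (y : C) : glued :=
  match pselect (range g y) with
  | left gy => inl (f (s2val (cid2 gy)))
  | right ngy => inr (exist _ y ngy)
  end.

Definition glued_set (P : set B) (Q : set C) : set glued :=
  [set s | match s with inl x => P x | inr y => Q (sval y) end].

Lemma glueC_g a : glueC (g a) = glueB (f a).
Proof.
rewrite /glueC; case: pselect => [gy|]; last by case; exists a.
by case: cid2 => a' _ /= /ginj ->.
Qed.

Lemma glueC_out y (ngy : ~ range g y) : glueC y = inr (exist _ y ngy).
Proof.
rewrite /glueC; case: pselect => [//|ngy'].
by congr (inr (exist _ y _)); exact: Prop_irrelevance.
Qed.

Lemma glued_cases (s : glued) :
  (exists x, s = glueB x) \/ (exists y, s = glueC y).
Proof.
case: s => [x|[y ngy]]; first by left; exists x.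
by right; exists y; rewrite (glueC_out ngy).
Qed.

Lemma preimage_glueC_glued_set (P : set B) (Q : set C) :
  (forall a, P (f a) <-> Q (g a)) -> glueC @^-1` glued_set P Q = Q.
Proof.
move=> PQ; apply/seteqP; split => y /=;
  by have [[a _ <-]|ngy] := pselect (range g y);
    rewrite ?glueC_g ?(glueC_out ngy) // => /PQ.
Qed.

Definition glued_open (U : set glued) :=
  open (glueB @^-1` U) /\ open (glueC @^-1` U).

Lemma glued_openT : glued_open setT.
Proof. by split; rewrite preimage_setT; exact: openT. Qed.

Lemma glued_openI : setI_closed glued_open.
Proof. by move=> U V [? ?] [? ?]; split; rewrite preimage_setI; exact: openI. Qed.

Lemma glued_open_bigcup (I : Type) (F : I -> set glued) :
  (forall i, glued_open (F i)) -> glued_open (\bigcup_i F i).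
Proof.
move=> oF; split; rewrite preimage_bigcup;
  by apply: bigcup_open => i _; case: (oF i).
Qed.

HB.instance Definition _ :=
  isOpenTopological.Build glued glued_openT glued_openI glued_open_bigcup.

Lemma glueB_continuous : continuous glueB.
Proof. by apply/continuousP => U []. Qed.

Lemma glueC_continuous : continuous glueC.
Proof. by apply/continuousP => U []. Qed.

Definition glued_dist (s t : glued) : \bar R :=
  match s, t with
  | inl x, inl x' => mdist x x'
  | inr y, inr y' => mdist (sval y) (sval y')
  | inl x, inr y => bridge_dist f g x (sval y)
  | inr y, inl x => bridge_dist g f (sval y) x
  end.

Lemma glued_distBB x x' : glued_dist (glueB x) (glueB x') = mdist x x'.
Proof. by []. Qed.

Lemma glued_distBC x y : glued_dist (glueB x) (glueC y) = bridge_dist f g x y.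
Proof.
have [[a _ <-]|ngy] := pselect (range g y); last by rewrite (glueC_out ngy).
by rewrite glueC_g /= bridge_distgr.
Qed.

Lemma glued_distCB y x : glued_dist (glueC y) (glueB x) = bridge_dist g f y x.
Proof.
have [[a _ <-]|ngy] := pselect (range g y); last by rewrite (glueC_out ngy).
by rewrite glueC_g /= bridge_distfl.
Qed.

Lemma glued_distCC y y' : glued_dist (glueC y) (glueC y') = mdist y y'.
Proof.
have [[a _ <-]|ngy] := pselect (range g y);
  have [[a' _ <-]|ngy'] := pselect (range g y').
- by rewrite !glueC_g /= fg_dist.
- by rewrite glueC_g (glueC_out ngy') /= bridge_distfl.
- by rewrite glueC_g (glueC_out ngy) /= bridge_distgr.
- by rewrite (glueC_out ngy) (glueC_out ngy').
Qed.

Let glued_distE := (glued_distBB, glued_distBC, glued_distCB, glued_distCC).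

Lemma glued_dist_ge0 s t : 0 <= glued_dist s t.
Proof.
by case: (glued_cases s) => -[x ->]; case: (glued_cases t) => -[y ->];
  rewrite glued_distE ?bridge_dist_ge0.
Qed.

Lemma glued_dist_refl s : glued_dist s s = 0.
Proof. by case: (glued_cases s) => -[x ->]; rewrite glued_distE mdist_refl. Qed.

Lemma glued_dist_triangle s t u :
  glued_dist s u <= glued_dist s t + glued_dist t u.
Proof.
case: (glued_cases s) => -[x ->]; case: (glued_cases t) => -[y ->];
  case: (glued_cases u) => -[z ->]; rewrite !glued_distE.
- exact: mdist_triangle.
- exact: bridge_dist_trianglel.
- exact: mdist_le_bridge_dist.
- exact: bridge_dist_triangler.
- exact: bridge_dist_triangler.
- exact: mdist_le_bridge_dist.
- exact: bridge_dist_trianglel.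
- exact: mdist_triangle.
Qed.

Lemma bridge_dist_sep x y :
  bridge_dist f g x y = 0 -> bridge_dist g f y x = 0 -> range g y.
Proof.
move=> /(bridge_dist_eq0 fcont gcont) [a [xfa gay]].
move=> /(bridge_dist_eq0 gcont fcont) [a' [yga' fa'x]].
exists a => //; apply: (mch_sep (mprop C)) gay _.
apply/le_anti; rewrite mdist_ge0 andbT.
apply: le_trans (mdist_triangle y (g a') (g a)) _.
rewrite yga' add0e fg_dist.
by apply: le_trans (mdist_triangle _ x _) _; rewrite fa'x xfa adde0.
Qed.

Lemma glued_dist_sep s t : glued_dist s t = 0 -> glued_dist t s = 0 -> s = t.
Proof.
case: s => [x|[y ngy]]; case: t => [x'|[y' ngy']] /= st ts.
- by rewrite (mch_sep (mprop B) st ts).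
- by case: ngy'; exact: bridge_dist_sep st ts.
- by case: ngy; exact: bridge_dist_sep ts st.
- move: ngy'; rewrite -(mch_sep (mprop C) st ts) => ngy'.
  by congr (inr (exist _ y _)); exact: Prop_irrelevance.
Qed.

Lemma glued_compact : compact [set: glued].
Proof.
rewrite (_ : [set: glued] = range glueB `|` range glueC).
  apply: compactU; apply: continuous_compact.
  - exact/continuous_subspaceT/glueB_continuous.
  - exact: mch_compact (mprop B).
  - exact/continuous_subspaceT/glueC_continuous.
  - exact: mch_compact (mprop C).
apply/seteqP; split => // s _.
by case: (glued_cases s) => -[z ->]; [left|right]; exists z.
Qed.

Lemma glued_separated x y (ngy : ~ range g y) :
  ~ cluster (nbhs (glueB x)) (inr (exist _ y ngy)).
Proof.
have hC := mch_hausdorff (mprop C).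
have range_closed : closed (range g).
  apply: compact_closed hC _; apply: continuous_compact.
    exact: continuous_subspaceT.
  exact: mch_compact (mprop A).
have [|W [W' [oW oW' yW gW' WW']]] := (@normal_openP R C).1
  (compact_normal hC (mch_compact (mprop C))) [set y] (range g)
  (@accessible_closed_set1 _ (hausdorff_accessible hC) y) range_closed.
  by apply/seteqP; split => // z [-> ?].
have W'g a : W' (g a) by apply: gW'; exists a.
have nWg a : ~ W (g a) by move=> Wga; rewrite -[False]/(set0 (g a)) -WW'.
move=> /(_ (glued_set setT W') (glued_set set0 W)) [||z []].
- apply: open_nbhs_nbhs; split => //; split; first exact: openT.
  by rewrite preimage_glueC_glued_set.
- apply: open_nbhs_nbhs; split; last exact: yW.
  split; first exact: open0.
  by rewrite preimage_glueC_glued_set // => a; split => // /nWg.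
by case: z => [//|[z ?]] /= W'z Wz; rewrite -[False]/(set0 z) -WW'.
Qed.

Context (D : topologicalType) (h : B -> D) (k : C -> D).
Hypotheses (hD : hausdorff_space D) (hcont : continuous h) (kcont : continuous k).
Hypotheses (hinj : injective h) (kinj : injective k) (hfkg : h \o f = k \o g).

Definition glued_to (s : glued) : D :=
  match s with inl x => h x | inr y => k (sval y) end.

Lemma glued_to_continuous : continuous glued_to.
Proof.
apply/continuousP => O oO.
rewrite (_ : glued_to @^-1` O = glued_set (h @^-1` O) (k @^-1` O)).
  split; first exact: (continuousP _).1 hcont _ oO.
  rewrite preimage_glueC_glued_set; first exact: (continuousP _).1 kcont _ oO.
  by move=> a; rewrite /= -[k (g a)]/((k \o g) a) -hfkg.
by apply/seteqP; split => -[].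
Qed.

(* Points with distinct images in [D] are separated there; the remaining pairs
   are a point of [B] and one of [C] outside [range g]. *)
Lemma glued_hausdorff : hausdorff_space glued.
Proof.
move=> s t st; have := hD (cluster_continuous glued_to_continuous st).
case: s t st => [x|[y ngy]] [x'|[y' ngy']] /= st.
- by move/hinj ->.
- by case: (glued_separated st).
- by rewrite /cluster /= meetsC in st; case: (glued_separated st).
- move/kinj => yy'; move: ngy' st; rewrite -yy' => ngy' _.
  by congr (inr (exist _ y _)); exact: Prop_irrelevance.
Qed.

(* The sublevel sets of [glued_dist] are images of compact sublevel sets of the
   four distances it is made of, hence closed. *)
Lemma glued_dist_lsc :
  lower_semicontinuous (fun z : glued * glued => glued_dist z.1 z.2).
Proof.
apply/lower_semicontinuousP => r; rewrite -closedC.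
have closed_image (X Y : MetCH_sep R) (phi : X -> glued) (psi : Y -> glued)
    (F : X -> Y -> \bar R) :
    continuous phi -> continuous psi ->
    lower_semicontinuous (fun z : X * Y => F z.1 z.2) ->
    closed ((fun z => (phi z.1, psi z.2)) @` [set z | ~ r%:E < F z.1 z.2]).
  move=> cphi cpsi /lower_semicontinuousP lscF.
  apply: compact_closed.
    exact: hausdorff_prod glued_hausdorff glued_hausdorff.
  apply: continuous_compact.
    exact/continuous_subspaceT/continuous_prod_map.
  apply: (@subclosed_compact _ _ setT) => //; first exact: open_closedC (lscF r).
  rewrite -setXTT.
  exact: compact_setX (mch_compact (mprop X)) (mch_compact (mprop Y)).
rewrite (_ : ~` _ =
  (fun z => (glueB z.1, glueB z.2)) @` [set z | ~ r%:E < mdist z.1 z.2] `|`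
  (fun z => (glueB z.1, glueC z.2)) @`
    [set z | ~ r%:E < bridge_dist f g z.1 z.2] `|`
  (fun z => (glueC z.1, glueB z.2)) @`
    [set z | ~ r%:E < bridge_dist g f z.1 z.2] `|`
  (fun z => (glueC z.1, glueC z.2)) @` [set z | ~ r%:E < mdist z.1 z.2]).
  by repeat apply: closedU; apply: closed_image; first [exact: glueB_continuous
    | exact: glueC_continuous | exact: mdist_lsc | exact: bridge_dist_lsc].
apply/seteqP; split => [[s t] /= nr|].
  case: (glued_cases s) => -[x ?]; case: (glued_cases t) => -[y ?]; subst s t;
    rewrite glued_distE in nr;
    [left; left; left|left; left; right|left; right|right]; by exists (x, y).
have inC s t : ~ r%:E < glued_dist s t ->
  (~` [set z | r%:E < glued_dist z.1 z.2]) (s, t) by [].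
by move=> _ [[[[[x y] nr <-]|[[x y] nr <-]]|[[x y] nr <-]]|[[x y] nr <-]];
  apply: inC; rewrite glued_distE.
Qed.

Lemma glued_is_metCH_sep : is_metCH_sep glued_dist.
Proof.
split; [exact: glued_hausdorff|exact: glued_compact|exact: glued_dist_ge0
       |exact: glued_dist_refl|exact: glued_dist_triangle|exact: glued_dist_sep|].
by move=> u u0; apply: lower_semicontinuous_open_gt glued_dist_lsc u0.
Qed.

Definition glued_metCH : MetCH_sep R := MkMetCH glued_is_metCH_sep.

End glued_space.

Section pushout_pullback.
Context {R : realType} {A B C D : MetCH_sep R}.
Variables (f : A -> B) (g : A -> C) (h : B -> D) (k : C -> D).

Lemma pushout_embedding_fiber : embedding f -> embedding g ->
  injective h -> injective k -> is_pushout f g h k ->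
  forall b c, h b = k c -> exists a, f a = b /\ g a = c.
Proof.
move=> [[fcont _] [_ fdist]] [[gcont _] [ginj gdist]] hinj kinj [sq univ] b c hbkc.
have [_ _ [hcont _] [kcont _] hfkg] := sq.
have fg_dist a a' : mdist (g a) (g a') = mdist (f a) (f a') by rewrite gdist fdist.
pose E := glued_metCH fcont gcont ginj fg_dist (mch_hausdorff (mprop D))
  hcont kcont hinj kinj hfkg.
have glueB_morph : morph (glueB g : B -> E).
  by split => [|x x']; [exact: glueB_continuous|exact: lexx].
have glueC_morph : morph (glueC f g : C -> E).
  split => [|y y']; first exact: glueC_continuous.
  have -> : mdist (glueC f g y : E) (glueC f g y') = mdist y y'.
    exact: glued_distCC.
  exact: lexx.
have glue_comm : glueB g \o f = glueC f g \o g.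
  by apply/funext => a /=; rewrite glueC_g.
have [u [[_ uh uk] _]] := univ E _ _ glueB_morph glueC_morph glue_comm.
have : glueB g b = glueC f g c by rewrite -uh -uk /= hbkc.
have [[a _ <-]|ngc] := pselect (range g c); last by rewrite (glueC_out _ ngc).
by rewrite glueC_g // => -[->]; exists a.
Qed.

Lemma pullback_of_fibers : comm_square f g h k -> embedding f ->
  (forall b c, h b = k c -> exists a, f a = b /\ g a = c) ->
  is_pullback f g h k.
Proof.
move=> sq [[fcont _] [finj fdist]] fiber; split => // Z p q [pcont pdist] _ hpkq.
have /choice [u uP] z : exists a, f a = p z /\ g a = q z.
  by apply: fiber; exact: (congr1 (fun F => F z) hpkq).
have fu : f \o u = p by apply/funext => z; exact: (uP z).1.
exists u; split; first split.
- split => [|z z']; last by rewrite -fdist !(uP _).1.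
  apply: (continuous_compact_injective_factor (mch_compact (mprop A))
    (mch_hausdorff (mprop B)) fcont finj).
  by rewrite fu.
- exact: fu.
- by apply/funext => z; exact: (uP z).2.
- by move=> u' [_ fu' _]; apply/funext => z; apply: finj; rewrite (uP z).1 -fu'.
Qed.

End pushout_pullback.

Theorem lemma4p4 (R : realType) (A B C D : MetCH_sep R)
  (f : A -> B) (g : A -> C) (h : B -> D) (k : C -> D) :
  embedding f -> embedding g -> embedding h -> embedding k ->
  is_pushout f g h k -> is_pullback f g h k.
Proof.
move=> ef eg [_ [hinj _]] [_ [kinj _]] PO.
apply: (pullback_of_fibers PO.1 ef).
exact: pushout_embedding_fiber ef eg hinj kinj PO.
Qed.
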